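(* Let $\chi,m\geq 2$ be integers, $\varepsilon>0$, and $R=\vec{R}(\chi)$. Then there exists an integer $M_0=M_0(\chi,m,\varepsilon)$ such that the following holds for every $M\geq M_0$. Let $t\geq1$ be an integer and let the edges of $K^{(3)}_{tM}$ be coloured red/blue with no blue copy of $H(TT_\chi,m)$. Suppose $V(K^{(3)}_{tM})$ is partitioned into $t$ sets $V_1,\dots,V_t$, each inducing a red copy of $K^{(3)}_M$. Then there exists a red closed $2$-clique chain $Q$ on at least $\frac{t(M-30)}{R-1}$ vertices such that each flexible element of $Q$ has at least $M/2$ vertices and all but at most $\varepsilon v(Q)$ vertices of $Q$ are flexible vertices.
   Context: $TT_\chi$ denotes the transitive tournament on $[\chi]$; $\vec{R}(\ell)$ is the least $N$ such that every tournament on at least $N$ vertices contains a copy of $TT_\ell$. $H(T_\chi,m)$ is the 3-uniform hypergraph on disjoint sets $A_1,\dots,A_\chi$ of size $m$ with edges $\{xyz: x,y\in A_i,\ z\in A_j,\ (i,j)\text{ an arc of }T_\chi\}$. A closed $2$-clique chain (3-uniform) is a 3-graph $F$ with $V(F)=\{v_i:i\in\mathbb{Z}/p\mathbb{Z}\}$ and cyclic intervals $I_1,\dots,I_d$ covering $\mathbb{Z}/p\mathbb{Z}$ with $|I_j|\ge3$, each $\{v_i:i\in I_j\}$ inducing a clique in $F$, $|I_j\cap I_{j+1}|=2$ for $j\in[d-1]$ and $|I_d\cap I_1|=2$. The sets $S_j=\{v_i:i\in I_j\}$ are its elements; an element is flexible if $|S_j|>4$. A vertex $v_i$ is a spine vertex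 if $i\in I_j\cap I_{j+1}$ for some $j$ (cyclically), and a flexible vertex otherwise. A red chain is one all of whose edges are red. *)

From HB Require Import structures.
From mathcomp Require Import all_boot all_order all_algebra.
From mathcomp Require Import reals.
Set Implicit Arguments. Unset Strict Implicit. Unset Printing Implicit Defensive.
Import Order.TTheory GRing.Theory Num.Theory.

Definition tournament (N : nat) (T : rel 'I_N) : Prop :=
  (forall x, ~~ T x x) /\ (forall x y, x != y -> T x y != T y x).

Definition contains_TT (l N : nat) (T : rel 'I_N) : Prop :=
  exists g : 'I_l -> 'I_N, injective g /\ forall i j : 'I_l, i < j -> T (g i) (g j).

Definition TT_forced (l N : nat) : Prop :=
  forall N', N <= N' -> forall T : rel 'I_N', tournament T -> contains_TT l T.

Definition is_tourn_ramsey (l R : nat) : Prop :=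
  TT_forced l R /\ forall N, TT_forced l N -> R <= N.

(* A red/blue colouring of the triples of 'I_n: col e = true means e is red.
   (Only the values on 3-element sets are relevant.) *)
Definition colouring (n : nat) := {set 'I_n} -> bool.

(* A blue copy of H(TT_chi, m): vertex set 'I_chi * 'I_m (A_i = {i} x 'I_m),
   edges {xyz : x,y in A_i distinct, z in A_j, i < j}. *)
Definition blue_H (chi m n : nat) (col : colouring n) : Prop :=
  exists f : 'I_chi * 'I_m -> 'I_n, injective f /\
    forall (i j : 'I_chi) (x y z : 'I_m), i < j -> x != y ->
      ~~ col [set f (i, x); f (i, y); f (j, z)].

Definition cyc_interval (p : nat) (I : {set 'I_p}) : Prop :=
  exists (s : 'I_p) (l : nat), I = [set x : 'I_p | (x + p - s) %% p < l].

(* A red closed 2-clique chain with vertices v_0, ..., v_{p-1} (v injective into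
   'I_n) and cyclic intervals I 0, ..., I (d-1); the chain's edges are the triples
   inside the elements S_j = v @: I j, all of which must be red. *)
Definition red_closed_chain (n : nat) (col : colouring n) (p : nat)
    (v : 'I_p -> 'I_n) (d : nat) (I : nat -> {set 'I_p}) : Prop :=
  injective v /\ 0 < d /\
  (forall j, j < d -> cyc_interval (I j)) /\
  (forall j, j < d -> 3 <= #|I j|) /\
  (forall j, j < d -> #|I j :&: I (j.+1 %% d)| = 2) /\
  (forall x : 'I_p, exists2 j, j < d & x \in I j) /\
  (forall j, j < d -> forall a b c : 'I_p, a \in I j -> b \in I j -> c \in I j ->
        a != b -> a != c -> b != c -> col [set v a; v b; v c]).

Definition chain_elem (n p : nat) (v : 'I_p -> 'I_n) (I : nat -> {set 'I_p}) j :=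
  v @: I j.

Definition flexible_elem (n p : nat) (v : 'I_p -> 'I_n) (I : nat -> {set 'I_p}) j :=
  4 < #|chain_elem v I j|.

Definition spine (p d : nat) (I : nat -> {set 'I_p}) (i : 'I_p) : bool :=
  [exists j : 'I_d, i \in I j :&: I (j.+1 %% d)].

Definition spine_set (p d : nat) (I : nat -> {set 'I_p}) : {set 'I_p} :=
  [set i | spine d I i].

From HB Require Import structures.
From mathcomp Require Import all_boot all_order all_algebra.
From mathcomp Require Import reals.
From mathcomp Require Import zify.
From mathcomp Require Import boolp unstable.
Import Order.TTheory GRing.Theory Num.Theory.
Set Implicit Arguments. Unset Strict Implicit. Unset Printing Implicit Defensive.

(* Call two of the red blocks linked if, after deleting any two vertices from each, some pair
   of vertices in one and some pair in the other still span a red K4.  If R blocks were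
   pairwise unlinked, intersecting the witnesses would give R large sets with no such red K4
   between any two of them; Ramsey's theorem then makes every pair of these sets blue in one
   direction (all triples with two vertices in one set and one in the other are blue), and a
   transitive subtournament of this orientation is a blue H(TT_chi, m).  So the linked graph
   on the t blocks has independence number less than R, hence a cycle through at least
   t / (R - 1) blocks.  Along it, each block is covered by two flexible elements of about M / 2
   vertices, and consecutive blocks are joined by the 4-vertex element spanned by a linking red
   K4, chosen to avoid the previous one; this costs only six spine vertices per block. *)

Lemma subset_of_card (T : finType) (A : {set T}) n :
  n <= #|A| -> exists2 B : {set T}, B \subset A & #|B| = n.
Proof.
case/card_geqP=> s [s_uniq s_size sA]; exists [set x in s].
  by apply/subsetP=> x; rewrite inE => /sA.
by rewrite cardsE (card_uniqP s_uniq).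
Qed.

Section GraphRamsey.
Variable T : finType.

Definition clique (e : rel T) (A : {set T}) :=
  forall x y, x \in A -> y \in A -> x != y -> e x y.

Definition nbhd (e : rel T) (X : {set T}) x := [set y in X | (y != x) && e x y].

Lemma clique0 e : clique e set0.
Proof. by move=> x y; rewrite inE. Qed.

Lemma clique_sub e (A B : {set T}) : A \subset B -> clique e B -> clique e A.
Proof. by move=> /subsetP AB eB x y /AB xB /AB yB; apply: eB. Qed.

Lemma nbhd_sub e (X : {set T}) x : nbhd e X x \subset X.
Proof. by apply/subsetP=> y; rewrite inE => /andP[]. Qed.

Lemma card_nbhd_split e (X : {set T}) x : x \in X ->
  #|X| <= 1 + #|nbhd e X x| + #|nbhd [rel y z | ~~ e y z] X x|.
Proof.
move=> Xx; rewrite -(cards1 x).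
have XU : X \subset [set x] :|: nbhd e X x :|: nbhd [rel y z | ~~ e y z] X x.
  apply/subsetP=> y Xy; rewrite !inE Xy /=.
  by case: (y =P x) => //= _; case: (e x y).
apply: leq_trans (subset_leq_card XU) _.
apply: leq_trans (leq_card_setU _ _) _; rewrite leq_add2r; exact: leq_card_setU.
Qed.

Lemma clique_nbhd_setU1 e (X Y : {set T}) x : symmetric e -> x \in X ->
  Y \subset nbhd e X x -> clique e Y ->
  [/\ x |: Y \subset X, #|x |: Y| = #|Y|.+1 & clique e (x |: Y)].
Proof.
move=> e_sym Xx /subsetP YN eY.
have xY : x \notin Y by apply/negP=> /YN; rewrite inE eqxx andbF.
split.
- by apply/subsetP=> y /setU1P[->//|/YN]; rewrite inE => /andP[].
- by rewrite cardsU1 xY.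
move=> y z; rewrite !in_setU1 => /predU1P[->|Yy] /predU1P[->|Yz]; rewrite ?eqxx // => yz.
- by move/YN: Yz; rewrite inE => /and3P[].
- by move/YN: Yy; rewrite inE e_sym => /and3P[].
- exact: eY.
Qed.

Lemma ramsey_binomial e : symmetric e -> forall a b (X : {set T}),
  'C(a + b, a) <= #|X| ->
  (exists2 Y : {set T}, Y \subset X & a <= #|Y| /\ clique e Y) \/
  (exists2 Y : {set T}, Y \subset X & b <= #|Y| /\ clique [rel y z | ~~ e y z] Y).
Proof.
move=> e_sym a b; move: {2}(a + b) (erefl (a + b)) => n.
elim: n a b => [|n IH] [|a] [|b] //= ab_n X XC.
all: try by left; exists set0; rewrite ?sub0set ?cards0 //; split=> //; exact: clique0.
all: try by right; exists set0; rewrite ?sub0set ?cards0 //; split=> //; exact: clique0.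
have ne_sym : symmetric [rel y z | ~~ e y z] by move=> y z /=; rewrite e_sym.
have [x Xx] : exists x, x \in X.
  by apply/set0Pn; rewrite -card_gt0; apply: leq_trans XC; rewrite bin_gt0 leq_addr.
have binC : 'C(a.+1 + b.+1, a.+1) = 'C(a + b.+1, a) + 'C(a.+1 + b, a.+1).
  by rewrite addSn binS addnS addSn addnC.
have Xsplit := card_nbhd_split e Xx.
have [Nbig|Nsmall] := leqP 'C(a + b.+1, a) #|nbhd e X x|.
  have [[Y YN [aY eY]]|[Y YN [bY eY]]] := IH a b.+1 ltac:(lia) _ Nbig.
    have [YX cardY eY'] := clique_nbhd_setU1 e_sym Xx YN eY.
    by left; exists (x |: Y); rewrite ?cardY.
  by right; exists Y => //; apply: subset_trans YN (nbhd_sub _ _ _).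
have [NNbig|NNsmall] := leqP 'C(a.+1 + b, a.+1) #|nbhd [rel y z | ~~ e y z] X x|.
  have [[Y YN [aY eY]]|[Y YN [bY eY]]] := IH a.+1 b ltac:(lia) _ NNbig.
    by left; exists Y => //; apply: subset_trans YN (nbhd_sub _ _ _).
  have [YX cardY eY'] := clique_nbhd_setU1 ne_sym Xx YN eY.
  by right; exists (x |: Y); rewrite ?cardY.
by move: XC; rewrite binC; lia.
Qed.

End GraphRamsey.

Lemma tournament_of_orientation n (B : rel 'I_n) :
  tournament [rel a b : 'I_n | (a != b) && (if a < b then B a b else ~~ B b a)].
Proof.
split=> [a|a b ab] /=; first by rewrite eqxx.
have ba : b != a by rewrite eq_sym.
rewrite ab ba /=.
case: ltngtP => [_|_|/val_inj abE]; last by rewrite abE eqxx in ab.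
- by case: (B a b).
- by case: (B b a).
Qed.

Section Colouring.
Variables (V : finType) (col : {set V} -> bool).

Definition red_set (Q : {set V}) := forall a b c, a \in Q -> b \in Q -> c \in Q ->
  a != b -> a != c -> b != c -> col [set a; b; c].

Lemma set3C12 (a b c : V) : [set a; b; c] = [set b; a; c].
Proof. by apply/setP=> z; rewrite !inE; case: (z == a); case: (z == b). Qed.

Lemma set3C23 (a b c : V) : [set a; b; c] = [set a; c; b].
Proof. by apply/setP=> z; rewrite !inE; case: (z == b); case: (z == c); rewrite ?orbT. Qed.

Lemma set4P (a x y u w : V) :
  a \in [set x; y; u; w] -> [\/ a = x, a = y, a = u | a = w].
Proof.
rewrite !inE => /orP[/orP[/orP[]|]|] /eqP->;
  by [constructor 1 | constructor 2 | constructor 3 | constructor 4].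
Qed.

Lemma red_set4 x y u w :
  col [set x; y; u] -> col [set x; y; w] -> col [set x; u; w] -> col [set y; u; w] ->
  red_set [set x; y; u; w].
Proof.
move=> xyu xyw xuw yuw a b c /set4P[]-> /set4P[]-> /set4P[]->; rewrite ?eqxx //= => _ _ _.
all: first [ assumption | rewrite set3C12; assumption | rewrite set3C23; assumption
  | rewrite set3C12 set3C23; assumption | rewrite set3C23 set3C12; assumption
  | rewrite set3C12 set3C23 set3C12; assumption ].
Qed.

Lemma red_setS (A B : {set V}) : A \subset B -> red_set B -> red_set A.
Proof. by move=> /subsetP AB redB a b c /AB Ba /AB Bb /AB Bc; apply: redB. Qed.

Definition red_link (X : {set V}) u :=
  forall x y, x \in X -> y \in X -> x != y -> col [set x; y; u].
Definition blue_link (X : {set V}) u :=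
  forall x y, x \in X -> y \in X -> x != y -> ~~ col [set x; y; u].

Definition diag_ramsey s := 'C(s + s, s).

Lemma ramsey_links (us : seq V) L (X : {set V}) : iter (size us) diag_ramsey L <= #|X| ->
  exists2 X' : {set V}, X' \subset X &
    L <= #|X'| /\ forall u, u \in us -> red_link X' u \/ blue_link X' u.
Proof.
elim: us X => [|u us IH] X /= X_big.
  by exists X => //; split=> // u; rewrite in_nil.
have e_sym : symmetric [rel x y | col [set x; y; u]] by move=> x y /=; rewrite set3C12.
have [] := ramsey_binomial e_sym X_big => -[Y YX [Y_big eY]];
  have [X' X'Y [X'_big X'_links]] := IH Y Y_big;
  exists X'; rewrite ?(subset_trans X'Y YX) //; split=> // v; rewrite in_cons;
  case/predU1P=> [->|/X'_links //].
- by left; apply: clique_sub X'Y eY.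
- by right; apply: clique_sub X'Y eY.
Qed.

Definition no_red22 (X Y : {set V}) := forall x y u w, x \in X -> y \in X -> u \in Y -> w \in Y ->
  x != y -> u != w -> ~ red_set [set x; y; u; w].

Definition blue21 (A B : {set V}) := forall u, u \in B -> blue_link A u.

Lemma set4C (x y u w : V) : [set x; y; u; w] = [set u; w; x; y].
Proof.
apply/setP=> z; rewrite !inE.
by case: (z == x); case: (z == y); case: (z == u); case: (z == w).
Qed.

Lemma no_red22C (X Y : {set V}) : no_red22 X Y -> no_red22 Y X.
Proof. by move=> XY u w x y Yu Yw Xx Xy uw xy; rewrite set4C; apply: XY. Qed.

Lemma no_red22S (X Y X' Y' : {set V}) :
  X' \subset X -> Y' \subset Y -> no_red22 X Y -> no_red22 X' Y'.
Proof.
by move=> /subsetP X'X /subsetP Y'Y XY x y u w /X'X Xx /X'X Xy /Y'Y Yu /Y'Y Yw; apply: XY.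
Qed.

Lemma blue21S (A B A' B' : {set V}) : A' \subset A -> B' \subset B -> blue21 A B -> blue21 A' B'.
Proof. by move=> /subsetP A'A /subsetP B'B AB u /B'B Bu x y /A'A Ax /A'A Ay; apply: AB. Qed.

(* Two vertices of X in red triples with the same pair of Z would span a red K4 with it. *)
Lemma blue21_of_red_links (X Z : {set V}) :
  (forall u, u \in Z -> red_link X u) -> no_red22 X Z ->
  exists2 X' : {set V}, X' \subset X & #|X| <= #|X'| + #|Z| * #|Z| /\ blue21 Z X'.
Proof.
move=> Z_red XZ.
pose red_pair x (uw : V * V) := [&& uw.1 \in Z, uw.2 \in Z, uw.1 != uw.2 & col [set x; uw.1; uw.2]].
pose bad := [set x in X | [exists uw, red_pair x uw]].
pose f x := odflt (x, x) [pick uw | red_pair x uw].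
have f_red x : x \in bad -> red_pair x (f x).
  rewrite inE => /andP[_ /existsP[uw xuw]].
  by rewrite /f; case: pickP => [//|/(_ uw)]; rewrite xuw.
have f_inj : {in bad &, injective f}.
  move=> x x' bad_x bad_x' fx; apply/eqP/negP => /negP xx'.
  have /and4P[Zu Zw uw xuw] := f_red x bad_x.
  have /and4P[_ _ _] := f_red x' bad_x'; rewrite -fx => x'uw.
  have [Xx Xx'] : x \in X /\ x' \in X.
    by move: bad_x bad_x'; rewrite !inE => /andP[-> _] /andP[-> _].
  apply: (XZ x x' (f x).1 (f x).2) => //.
  by apply: red_set4 => //; [apply: (Z_red _ Zu) | apply: (Z_red _ Zw)].
have bad_card : #|bad| <= #|Z| * #|Z|.
  rewrite -(card_in_imset f_inj) -cardsX; apply: subset_leq_card.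
  apply/subsetP=> _ /imsetP[x bad_x ->].
  by have /and4P[Zu Zw _ _] := f_red x bad_x; rewrite inE Zu.
exists (X :\: bad); first exact: subsetDl.
split.
  by rewrite cardsD; have := subset_leq_card (subsetIr X bad); lia.
move=> x; rewrite !inE => /andP[not_bad Xx] u w Zu Zw uw.
move: not_bad; rewrite Xx /= => /existsPn/(_ (u, w)).
by rewrite /red_pair /= Zu Zw uw /= [[set u; w; x]]set3C23 [[set u; x; w]]set3C12.
Qed.

Definition pair_bound k := maxn (iter (k + k) diag_ramsey (k + (k + k) * (k + k))) (k + k).

Lemma pair_bound_ge k : k <= pair_bound k.
Proof. exact: leq_trans (leq_addr k k) (leq_maxr _ _). Qed.

Lemma blue21_pair k (X Y : {set V}) :
  no_red22 X Y -> pair_bound k <= #|X| -> pair_bound k <= #|Y| ->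
  exists X' Y' : {set V}, [/\ X' \subset X, Y' \subset Y, k <= #|X'|, k <= #|Y'| &
                           blue21 X' Y' \/ blue21 Y' X'].
Proof.
move=> XY X_big Y_big.
have [Y0 Y0Y Y0_card] := subset_of_card (leq_trans (leq_maxr _ _) Y_big).
have [X1 X1X [X1_big X1_links]] : exists2 X1 : {set V}, X1 \subset X &
    k + (k + k) * (k + k) <= #|X1| /\ forall u, u \in enum Y0 -> red_link X1 u \/ blue_link X1 u.
  by apply: ramsey_links; rewrite -cardE Y0_card; apply: leq_trans X_big; apply: leq_maxl.
pose Yr := [set u in Y0 | `[< red_link X1 u >]].
pose Yb := Y0 :\: Yr.
have YrY0 : Yr \subset Y0 by apply/subsetP=> u; rewrite inE => /andP[].
have YrYb_card : #|Yr| + #|Yb| = k + k.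
  by rewrite cardsD (setIidPr YrY0) -Y0_card; have := subset_leq_card YrY0; lia.
have Yr_red u : u \in Yr -> red_link X1 u by rewrite inE => /andP[_ /asboolP].
have Yb_blue u : u \in Yb -> blue_link X1 u.
  rewrite !inE => /andP[Yr_u Y0u].
  have [red_u|//] := X1_links u ltac:(by rewrite mem_enum).
  by move: Yr_u; rewrite Y0u /=; case/asboolPn.
have [Yb_big|Yr_big] := leqP k #|Yb|.
  exists X1, Yb; split => //.
  - exact: subset_trans (subsetDl _ _) Y0Y.
  - exact: leq_trans (leq_addr _ _) X1_big.
  - by left.
have [X' X'X1 [X'_big X'_blue]] :=
  blue21_of_red_links Yr_red (no_red22S X1X (subset_trans YrY0 Y0Y) XY).
exists X', Yr; split.
- exact: subset_trans X'X1 X1X.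
- exact: subset_trans YrY0 Y0Y.
- have : #|Yr| * #|Yr| <= (k + k) * (k + k) by apply: leq_mul; lia.
  lia.
- lia.
- by right.
Qed.

Lemma iter_pair_bound_mono n n' k : n <= n' -> iter n pair_bound k <= iter n' pair_bound k.
Proof.
elim: n' => [|n' IH]; first by rewrite leqn0 => /eqP->.
rewrite leq_eqVlt => /predU1P[->//|/IH]; move/leq_trans; apply; exact: pair_bound_ge.
Qed.

Lemma blue21_family (I : eqType) (s : seq (I * I)) k (W : I -> {set V}) :
  (forall a b, a != b -> no_red22 (W a) (W b)) ->
  (forall a, iter (size s) pair_bound k <= #|W a|) ->
  all (fun ab => ab.1 != ab.2) s ->
  exists2 W' : I -> {set V}, forall a, W' a \subset W a /\ k <= #|W' a| &
    forall ab, ab \in s -> blue21 (W' ab.1) (W' ab.2) \/ blue21 (W' ab.2) (W' ab.1).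
Proof.
elim: s W => [|[a b] s IH] W W_red22 W_big /=.
  by exists W => // ab; rewrite in_nil.
case/andP=> ab s_neq.
have [A' [B' [A'W B'W A'_big B'_big AB']]] := blue21_pair (W_red22 a b ab) (W_big a) (W_big b).
pose W1 c := if c == a then A' else if c == b then B' else W c.
have W1W c : W1 c \subset W c.
  by rewrite /W1; case: eqP => [->//|_]; case: eqP => [->//|_].
have [W' W'W1 W'_blue] : exists2 W' : I -> {set V}, forall c, W' c \subset W1 c /\ k <= #|W' c| &
    forall ab, ab \in s -> blue21 (W' ab.1) (W' ab.2) \/ blue21 (W' ab.2) (W' ab.1).
  apply: IH s_neq => [c c' cc'|c].
    exact: no_red22S (W1W c) (W1W c') (W_red22 c c' cc').
  rewrite /W1; case: eqP => _ //; case: eqP => _ //.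
  exact: leq_trans (pair_bound_ge _) (W_big c).
exists W' => [c|cd].
  by have [W'c W'_big] := W'W1 c; split=> //; apply: subset_trans W'c (W1W c).
rewrite in_cons => /predU1P[->|/W'_blue //] /=.
have W'a : W' a \subset A' by have [] := W'W1 a; rewrite /W1 eqxx.
have W'b : W' b \subset B' by have [] := W'W1 b; rewrite /W1 eq_sym (negbTE ab) eqxx.
by case: AB' => AB'; [left | right]; apply: blue21S AB'.
Qed.

Lemma blue21_orientation Rv m (W : 'I_Rv -> {set V}) :
  (forall a b, a != b -> no_red22 (W a) (W b)) ->
  (forall a, iter (Rv * Rv) pair_bound m <= #|W a|) ->
  exists2 W' : 'I_Rv -> {set V}, forall a, W' a \subset W a /\ m <= #|W' a| &
    forall a b, a != b -> blue21 (W' a) (W' b) \/ blue21 (W' b) (W' a).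
Proof.
move=> W_red22 W_big.
pose s := [seq ab <- [seq (a, b) | a <- enum 'I_Rv, b <- enum 'I_Rv] | ab.1 != ab.2].
have s_size : size s <= Rv * Rv.
  rewrite size_filter; apply: leq_trans (count_size _ _) _.
  by rewrite size_allpairs size_enum_ord.
have [W' W'W W'_blue] := blue21_family W_red22
  (fun a => leq_trans (iter_pair_bound_mono m s_size) (W_big a)) (filter_all _ _).
exists W' => // a b ab; apply: (W'_blue (a, b)).
by rewrite mem_filter ab; apply: allpairs_f; rewrite mem_enum.
Qed.

Lemma transitive_blue21 chi Rv (W : 'I_Rv -> {set V}) : TT_forced chi Rv ->
  (forall a b, a != b -> blue21 (W a) (W b) \/ blue21 (W b) (W a)) ->
  exists g : 'I_chi -> 'I_Rv,
    injective g /\ forall i j : 'I_chi, i < j -> blue21 (W (g i)) (W (g j)).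
Proof.
move=> TT W_or.
pose B : rel 'I_Rv := fun a b => `[< blue21 (W a) (W b) >].
have [g [g_inj g_arcs]] := TT Rv (leqnn _) _ (tournament_of_orientation B).
exists g; split=> // i j ij; move: (g_arcs i j ij) => /= /andP[gij].
case: ifP => _; first by move/asboolP.
move/asboolPn => not_ji; by case: (W_or _ _ gij).
Qed.

Lemma blue_H_of_blue21 chi m (W : 'I_chi -> {set V}) (W_big : forall i, m <= #|W i|) :
  (forall i j, i != j -> [disjoint W i & W j]) ->
  (forall i j : 'I_chi, i < j -> blue21 (W i) (W j)) ->
  exists f : 'I_chi * 'I_m -> V, injective f /\
    forall (i j : 'I_chi) (x y z : 'I_m), i < j -> x != y ->
      ~~ col [set f (i, x); f (i, y); f (j, z)].
Proof.
move=> W_disj W_blue.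
pose f (ix : 'I_chi * 'I_m) := enum_val (widen_ord (W_big ix.1) ix.2).
have f_in ix : f ix \in W ix.1 by apply: enum_valP.
have f_inj : injective f.
  move=> [i x] [j y] fij.
  have ij : i = j.
    apply/eqP/negP => /negP /W_disj /disjointFr /(_ (f_in (i, x))).
    by rewrite fij (f_in (j, y)).
  subst j; congr (_, _); move: fij => /enum_val_inj /(congr1 val) /=; exact: val_inj.
exists f; split => // i j x y z ij xy.
apply: (W_blue i j ij) => //; try exact: (f_in (_, _)).
by apply: contra xy => /eqP /f_inj [->].
Qed.

Lemma blue_H_of_no_red22 chi m Rv (W : 'I_Rv -> {set V}) :
  TT_forced chi Rv ->
  (forall a b, a != b -> [disjoint W a & W b]) ->
  (forall a b, a != b -> no_red22 (W a) (W b)) ->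
  (forall a, iter (Rv * Rv) pair_bound m <= #|W a|) ->
  exists f : 'I_chi * 'I_m -> V, injective f /\
    forall (i j : 'I_chi) (x y z : 'I_m), i < j -> x != y ->
      ~~ col [set f (i, x); f (i, y); f (j, z)].
Proof.
move=> TT W_disj W_red22 W_big.
have [W' W'W W'_or] := blue21_orientation W_red22 W_big.
have [g [g_inj g_blue]] := transitive_blue21 TT W'_or.
have W'_big i : m <= #|W' (g i)| by have [] := W'W (g i).
apply: (@blue_H_of_blue21 _ _ (W' \o g) W'_big) => // i j ij.
have [[W'i _] [W'j _]] := (W'W (g i), W'W (g j)).
by apply: disjointWl W'i _; apply: disjointWr W'j _; apply: W_disj; rewrite (inj_eq g_inj).
Qed.

End Colouring.

Lemma split_last (T : eqType) (a : pred T) (x : T) (s : seq T) :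
  exists s1 s2, [/\ s = s1 ++ s2, ~~ has a s2 & (s1 = [::] \/ a (last x s1))].
Proof.
elim/last_ind: s => [|s z [s1 [s2 [-> s2a s1a]]]]; first by exists [::], [::]; split; auto.
case az: (a z).
  by exists (rcons (s1 ++ s2) z), [::]; rewrite cats0 last_rcons; split; auto.
exists s1, (rcons s2 z); split => //; first by rewrite rcons_cat.
by rewrite -cats1 has_cat negb_or s2a /= az.
Qed.

Section LongCycle.
Variables (T : finType) (G : rel T).
Hypotheses (G_sym : symmetric G) (G_irr : irreflexive G).

(* A single vertex counts as a cycle, and so does an edge traversed both ways. *)
Definition graph_cycle (c : seq T) := (size c == 1) || cycle G c.

Lemma maximal_path (U : {set T}) n (x : T) (p : seq T) : #|U| - size (x :: p) <= n ->
  x \in U -> {subset p <= U} -> uniq (x :: p) -> path G x p ->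
  exists x' p', [/\ x' \in U, {subset p' <= U}, uniq (x' :: p'), path G x' p' &
                  forall y, y \in U -> G x' y -> y \in x' :: p'].
Proof.
elim: n x p => [|n IH] x p n_bound Ux pU xp_uniq xp_path.
  exists x, p; split => // y Uy xy; apply/negPn/negP => yxp.
  have : size (y :: x :: p) <= #|U|.
    rewrite cardE; apply: uniq_leq_size; first by rewrite cons_uniq yxp.
    by move=> z; rewrite mem_enum !inE => /predU1P[->//|/predU1P[->//|/pU]].
  by move: n_bound => /=; lia.
case: (boolP [exists y in U, G x y && (y \notin x :: p)]) => [|no_ext].
  case/existsP=> y /and3P[Uy xy yxp]; apply: (IH y (x :: p)) => //=.
  - by move: n_bound => /=; lia.
  - by move=> z; rewrite inE => /predU1P[->//|/pU].
  - by rewrite yxp.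
  - by rewrite G_sym xy.
exists x, p; split => // y Uy xy; apply/negPn/negP => yxp.
by move/existsP: no_ext; apply; exists y; rewrite Uy xy yxp.
Qed.

Lemma cycle_through_nbhd (U : {set T}) u : u \in U ->
  exists x (C : seq T), [/\ uniq (x :: C), {subset x :: C <= U}, graph_cycle (x :: C) &
    forall y, y \in U -> G x y -> y \in x :: C].
Proof.
move=> Uu; have nilU : {subset [::] <= U} by [].
have [x [p [Ux pU xp_uniq xp_path x_nbhd]]] :=
  maximal_path (n := #|U|) (p := [::]) (leq_subr _ _) Uu nilU (erefl _) (erefl _).
have [C [D [pCD D_nbhd C_last]]] := split_last (G x) x p.
have xC_uniq : uniq (x :: C) by move: xp_uniq; rewrite pCD -cat_cons cat_uniq => /andP[].
exists x, C; split => //.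
- by move=> z; rewrite inE => /predU1P[->//|Cz]; apply: pU; rewrite pCD mem_cat Cz.
- case: C_last => [->//|C_last]; apply/orP; right.
  rewrite /= rcons_path G_sym C_last andbT.
  by move: xp_path; rewrite pCD cat_path => /andP[].
move=> y Uy xy; have := x_nbhd y Uy xy; rewrite pCD -cat_cons mem_cat => /orP[//|Dy].
by case/hasP: D_nbhd; exists y.
Qed.

Definition indep_le (U : {set T}) r :=
  forall S : {set T}, S \subset U -> r < #|S| -> exists x y, [/\ x \in S, y \in S & G x y].

Lemma indep_le_setD (U C : {set T}) x r : x \in C -> C \subset U ->
  (forall y, y \in U -> G x y -> y \in C) -> indep_le U r.+1 -> indep_le (U :\: C) r.
Proof.
move=> Cx CU x_nbhd U_indep S /subsetP SU' S_big.
have xS : x \notin S by apply/negP => /SU'; rewrite inE Cx.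
have xS_U : x |: S \subset U.
  apply/subsetP=> z /setU1P[->|/SU']; first exact: (subsetP CU).
  by rewrite inE => /andP[].
have [y [z [Sy Sz yz]]] := U_indep _ xS_U ltac:(by rewrite cardsU1 xS).
have no_x_nbhd v : v \in S -> ~~ G x v.
  by move=> /SU'; rewrite inE => /andP[vC Uv]; apply: contra vC; apply: x_nbhd.
move: Sy Sz yz; rewrite !in_setU1 => /predU1P[->|Sy] /predU1P[->|Sz].
- by rewrite G_irr.
- by rewrite (negbTE (no_x_nbhd z Sz)).
- by rewrite G_sym (negbTE (no_x_nbhd y Sy)).
- by exists y, z.
Qed.

Lemma long_cycle r (U : {set T}) : indep_le U r -> U != set0 ->
  exists c : seq T, [/\ uniq c, {subset c <= U}, c != [::], graph_cycle c & #|U| <= size c * r].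
Proof.
elim: r U => [|r IH] U U_indep /set0Pn[u Uu].
  have [x [y []]] := U_indep [set u] ltac:(by rewrite sub1set) ltac:(by rewrite cards1).
  by rewrite !inE => /eqP-> /eqP->; rewrite G_irr.
have [x [C [xC_uniq xCU xC_cycle x_nbhd]]] := cycle_through_nbhd Uu.
pose U' := U :\: [set z in x :: C].
have U_card : #|U| <= #|U'| + size (x :: C).
  have xC_card : #|[set z in x :: C]| = size (x :: C) by rewrite cardsE; apply/card_uniqP.
  rewrite cardsD -xC_card.
  by have := subset_leq_card (subsetIr U [set z in x :: C]); lia.
have [/eqP U'0|U'_ne0] := boolP (U' == set0).
  by exists (x :: C); split=> //; move: U_card; rewrite U'0 cards0 mulnS; lia.
have U'_indep : indep_le U' r.
  apply: (indep_le_setD (x := x)) U_indep; first by rewrite inE mem_head.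
    by apply/subsetP => z; rewrite inE => /xCU.
  by move=> y Uy /(x_nbhd y Uy); rewrite inE.
have [C' [C'_uniq C'U' C'_ne C'_cycle U'_card]] := IH U' U'_indep U'_ne0.
have C'U : {subset C' <= U} by move=> z /C'U'; rewrite inE => /andP[].
have [C'_short|C'_long] := leqP (size C') (size (x :: C)).
  exists (x :: C); split=> //.
  by have := leq_mul (leqnn r) C'_short; rewrite mulnS; lia.
by exists C'; split=> //; rewrite mulnS; lia.
Qed.

End LongCycle.

Section CyclicInterval.
Variable p : nat.

Definition cinterval (s l : nat) : {set 'I_p} := [set z : 'I_p | (z + p - s) %% p < l].

Lemma cinterval_cyc s l : s < p -> cyc_interval (cinterval s l).
Proof. by move=> sp; exists (Ordinal sp), l. Qed.

Lemma rot_modE s (z : 'I_p) : s < p -> (z + p - s) %% p = if s <= z then z - s else z + p - s.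
Proof.
move=> sp; have zp := ltn_ord z; case: (leqP s z) => sz; last by rewrite modn_small; lia.
by rewrite (_ : z + p - s = z - s + p); [rewrite modnDr modn_small; lia | lia].
Qed.

Lemma mem_cinterval s l (z : 'I_p) : s < p -> l <= p ->
  (z \in cinterval s l) = ((s <= z) && (z < s + l)) || (z + p < s + l).
Proof.
move=> sp lp; have zp := ltn_ord z.
by rewrite inE rot_modE //; case: (leqP s z) => sz; apply/idP/idP; lia.
Qed.

Lemma card_cinterval s l : s < p -> l <= p -> #|cinterval s l| = l.
Proof.
move=> sp lp; have p_gt0 : 0 < p by lia.
pose rot (z : 'I_p) := Ordinal (ltn_pmod (z + p - s) p_gt0).
have rot_inj : injective rot.
  move=> z z' /(congr1 val) /=; rewrite !rot_modE //.
  have := ltn_ord z; have := ltn_ord z' => zp z'p rotE; apply: val_inj => /=.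
  by move: rotE; case: (leqP s z) => ?; case: (leqP s z') => ?; lia.
have -> : cinterval s l = rot @^-1: [set i : 'I_p | i < l] by apply/setP => z; rewrite !inE.
rewrite card_preimset //.
have -> : [set i : 'I_p | i < l] = widen_ord lp @: [set: 'I_l].
  apply/setP => i; rewrite inE; apply/idP/imsetP => [il|[j _ ->]]; last by rewrite /= ltn_ord.
  by exists (Ordinal il); rewrite ?inE //; apply: val_inj.
by rewrite card_imset ?cardsT ?card_ord // => i j /(congr1 val) /= /val_inj.
Qed.

End CyclicInterval.

Definition pred_mod k a := (a + k.-1) %% k.

Lemma pred_modS k a : a.+1 < k -> pred_mod k a.+1 = a.
Proof.
by move=> ak; rewrite /pred_mod (_ : a.+1 + k.-1 = a + k); [rewrite modnDr modn_small; lia | lia].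
Qed.

Lemma pred_mod0 k : 0 < k -> pred_mod k 0 = k.-1.
Proof. by move=> k_gt0; rewrite /pred_mod add0n modn_small //; lia. Qed.

Lemma pred_modK k a : 0 < k -> a < k -> (pred_mod k a).+1 %% k = a.
Proof.
move=> k_gt0; case: a => [|a] ak; first by rewrite pred_mod0 // prednK // modnn.
by rewrite pred_modS // modn_small.
Qed.

Lemma card_set2_nat p (c1 c2 : nat) (S : {set 'I_p}) : c1 < p -> c2 < p -> c1 != c2 ->
  (forall z : 'I_p, (z \in S) = ((z : nat) == c1) || ((z : nat) == c2)) -> #|S| = 2.
Proof.
move=> c1p c2p c12 Sz.
have -> : S = [set Ordinal c1p; Ordinal c2p] by apply/setP => z; rewrite Sz !inE.
by rewrite cards2; case: eqP => // /(congr1 val) /= c12E; rewrite c12E eqxx in c12.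
Qed.

Lemma div3_cases k j : j < 3 * k ->
  exists2 a, a < k & [\/ j = 3 * a, j = 3 * a + 1 | j = 3 * a + 2].
Proof.
move=> jk; exists (j %/ 3); first by rewrite ltn_divLR // mulnC.
have := divn_eq j 3; have := ltn_pmod j (isT : 0 < 3).
by case: (j %% 3) => [|[|[|r]]] //= _ ->; [constructor 1 | constructor 2 | constructor 3]; lia.
Qed.

Lemma div3_addE a r : r < 3 -> (3 * a + r) %/ 3 = a /\ (3 * a + r) %% 3 = r.
Proof. by move=> r3; rewrite [3 * a]mulnC divnMDl // divn_small // addn0 modnMDl modn_small. Qed.

Section Chain.
Variables (n : nat) (col : colouring n) (M k : nat) (x0 : 'I_n).
Hypotheses (M_ge8 : 8 <= M) (k_gt0 : 0 < k).
Variables (B : nat -> {set 'I_n}) (x y u w : nat -> 'I_n).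

Definition ports a := [:: u (pred_mod k a); w (pred_mod k a); x a; y a].

Hypothesis B_card : forall a, a < k -> #|B a| = M.
Hypothesis B_disj : forall a b, a < k -> b < k -> a != b -> [disjoint B a & B b].
Hypothesis B_red : forall a, a < k -> red_set col (B a).
Hypothesis ports_uniq : forall a, a < k -> uniq (ports a).
Hypothesis ports_sub : forall a, a < k -> {subset ports a <= B a}.
Hypothesis link_red : forall a, a < k -> red_set col [set x a; y a; u a; w a].

Definition block_seq a :=
  [:: u (pred_mod k a); w (pred_mod k a)] ++ enum (B a :\: [set z in ports a]) ++ [:: x a; y a].

Lemma size_block_seq a : a < k -> size (block_seq a) = M.
Proof.
move=> ak; have portsB : [set z in ports a] \subset B a.
  by apply/subsetP => z; rewrite inE => /ports_sub->.
have card_ports : #|[set z in ports a]| = 4 by rewrite cardsE; apply/card_uniqP/ports_uniq.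
by rewrite /block_seq !size_cat /= -cardE cardsD (setIidPr portsB) card_ports B_card //; lia.
Qed.

Lemma uniq_block_seq a : a < k -> uniq (block_seq a).
Proof.
move=> ak; rewrite /block_seq (perm_uniq (introT permPl (perm_catCA [:: _; _] _ _))).
rewrite cat_uniq enum_uniq (ports_uniq ak : uniq ([:: _; _] ++ [:: _; _])) andbT.
apply/hasPn => z zp; rewrite mem_enum !inE; apply/nandP; left; rewrite negbK.
by move: zp; rewrite mem_cat !inE -!orbA.
Qed.

Lemma block_seq_sub a z : a < k -> z \in block_seq a -> z \in B a.
Proof.
move=> ak; rewrite /block_seq !mem_cat mem_enum => /or3P[zuw|/setDP[]//|zxy];
  apply: ports_sub => //; rewrite /ports !inE.
- by move: zuw; rewrite !inE => /orP[]->; rewrite ?orbT.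
- by move: zxy; rewrite !inE => /orP[]->; rewrite ?orbT.
Qed.

Lemma nth_block_seq_last a : a < k ->
  nth x0 (block_seq a) (M - 2) = x a /\ nth x0 (block_seq a) (M - 1) = y a.
Proof.
move=> ak; have := size_block_seq ak; rewrite /block_seq catA size_cat /= => <-.
by rewrite addnK addn2 subn1 /= !nth_cat ltnn subnn ltnNge leqnSn /= subSnn.
Qed.

Definition chain_vertex (z : 'I_(k * M)) : 'I_n := nth x0 (block_seq (z %/ M)) (z %% M).

Lemma chain_vertexE (z : 'I_(k * M)) a r :
  a < k -> r < M -> (z : nat) = a * M + r -> chain_vertex z = nth x0 (block_seq a) r.
Proof.
move=> ak rM zE; rewrite /chain_vertex zE divnMDl ?divn_small ?addn0 ?modnMDl ?modn_small //.
lia.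
Qed.

Lemma chain_vertex_block (z : 'I_(k * M)) : z %/ M < k /\ chain_vertex z \in B (z %/ M).
Proof.
have zk : z %/ M < k by rewrite ltn_divLR; [exact: ltn_ord | lia].
split=> //; apply: (block_seq_sub zk); apply: mem_nth.
by rewrite size_block_seq // ltn_pmod //; lia.
Qed.

Lemma chain_vertex_inj : injective chain_vertex.
Proof.
move=> z z' vzz'.
have [zk Bz] := chain_vertex_block z; have [z'k Bz'] := chain_vertex_block z'.
have divE : z %/ M = z' %/ M.
  apply/eqP/negP => /negP /(B_disj zk z'k) /disjointFr /(_ Bz).
  by rewrite vzz' Bz'.
move: vzz'; rewrite /chain_vertex divE => /eqP.
rewrite nth_uniq ?uniq_block_seq ?size_block_seq ?ltn_pmod //; try lia.
by move=> /eqP modE; apply: val_inj; rewrite /= (divn_eq z M) (divn_eq z' M) divE modE.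
Qed.

Definition half := M %/ 2.

Lemma half_bounds : 4 <= half /\ half * 2 <= M <= half * 2 + 1.
Proof. by rewrite /half; have := divn_eq M 2; have := ltn_pmod M (isT : 0 < 2); lia. Qed.

(* Block a occupies positions [a M, a M + M) in the order u, w (ending link a - 1), the rest
   of B a, x, y (starting link a).  It is covered by two flexible elements of sizes half + 1
   and M - half + 1 meeting in two positions, and the element at positions a M + M - 2, ...,
   a M + M + 1 (mod k M) is the red link {x a, y a, u a, w a} into the next block. *)
Definition chain_el (j : nat) : {set 'I_(k * M)} :=
  let a := j %/ 3 in
  if j %% 3 == 0 then cinterval (k * M) (a * M) (half + 1)
  else if j %% 3 == 1 then cinterval (k * M) (a * M + half - 1) (M - half + 1)
  else cinterval (k * M) (a * M + M - 2) 4.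

Lemma chain_el0 a : chain_el (3 * a) = cinterval (k * M) (a * M) (half + 1).
Proof. by rewrite /chain_el -(addn0 (3 * a)); have [-> ->] := div3_addE a (isT : 0 < 3). Qed.

Lemma chain_el1 a : chain_el (3 * a + 1) = cinterval (k * M) (a * M + half - 1) (M - half + 1).
Proof. by rewrite /chain_el; have [-> ->] := div3_addE a (isT : 1 < 3). Qed.

Lemma chain_el2 a : chain_el (3 * a + 2) = cinterval (k * M) (a * M + M - 2) 4.
Proof. by rewrite /chain_el; have [-> ->] := div3_addE a (isT : 2 < 3). Qed.

Lemma block_end a : a < k -> a * M + M <= k * M.
Proof. by move=> ak; have := leq_mul ak (leqnn M); rewrite mulSn addnC. Qed.

Lemma mem_chain_el0 a (z : 'I_(k * M)) : a < k ->
  (z \in chain_el (3 * a)) = (a * M <= z) && (z < a * M + half + 1).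
Proof.
move=> /block_end aM; have [h4 hM] := half_bounds; have zkM := ltn_ord z.
by rewrite chain_el0 mem_cinterval; try lia; apply/idP/idP; lia.
Qed.

Lemma mem_chain_el1 a (z : 'I_(k * M)) : a < k ->
  (z \in chain_el (3 * a + 1)) = (a * M + half - 1 <= z) && (z < a * M + M).
Proof.
move=> /block_end aM; have [h4 hM] := half_bounds; have zkM := ltn_ord z.
by rewrite chain_el1 mem_cinterval; try lia; apply/idP/idP; lia.
Qed.

Lemma mem_chain_el2 a (z : 'I_(k * M)) : a < k ->
  (z \in chain_el (3 * a + 2)) =
  ((a * M + M - 2 <= z) && (z < a * M + M + 2)) || (z + k * M < a * M + M + 2).
Proof.
move=> /block_end aM; have [h4 hM] := half_bounds; have zkM := ltn_ord z.
by rewrite chain_el2 mem_cinterval; try lia; apply/idP/idP; lia.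
Qed.

Lemma chain_el_cyc j : j < 3 * k -> cyc_interval (chain_el j).
Proof.
move=> /div3_cases[a /block_end aM]; have [h4 hM] := half_bounds.
by case=> ->; rewrite ?chain_el0 ?chain_el1 ?chain_el2; apply: cinterval_cyc; lia.
Qed.

Lemma card_chain_el j : j < 3 * k ->
  [\/ j %% 3 = 0 /\ #|chain_el j| = half + 1, j %% 3 = 1 /\ #|chain_el j| = M - half + 1
    | #|chain_el j| = 4].
Proof.
move=> /div3_cases[a /block_end aM]; have [h4 hM] := half_bounds.
case=> ->; rewrite ?chain_el0 ?chain_el1 ?chain_el2 card_cinterval; try lia.
- by constructor 1; rewrite -(addn0 (3 * a)); have [_ ->] := div3_addE a (isT : 0 < 3).
- by constructor 2; have [_ ->] := div3_addE a (isT : 1 < 3).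
- by constructor 3.
Qed.
Lemma chain_el_meet j : j < 3 * k -> #|chain_el j :&: chain_el (j.+1 %% (3 * k))| = 2.
Proof.
move=> /div3_cases[a ak]; have aM := block_end ak; have [h4 hM] := half_bounds.
case=> ->.
- have -> : (3 * a).+1 %% (3 * k) = 3 * a + 1 by rewrite modn_small; lia.
  apply: (@card_set2_nat _ (a * M + half - 1) (a * M + half)); try lia.
  move=> z; have zkM := ltn_ord z.
  by rewrite in_setI mem_chain_el0 // mem_chain_el1 //; apply/idP/idP; lia.
- have -> : (3 * a + 1).+1 %% (3 * k) = 3 * a + 2 by rewrite modn_small; lia.
  apply: (@card_set2_nat _ (a * M + M - 2) (a * M + M - 1)); try lia.
  move=> z; have zkM := ltn_ord z.
  by rewrite in_setI mem_chain_el1 // mem_chain_el2 //; apply/idP/idP; lia.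
have [a_last|a_next] : a.+1 = k \/ a.+1 < k by lia.
  have -> : (3 * a + 2).+1 %% (3 * k) = 3 * 0.
    by rewrite (_ : (3 * a + 2).+1 = 3 * k) ?modnn; lia.
  apply: (@card_set2_nat _ 0 1); try lia.
  move=> z; have zkM := ltn_ord z.
  by rewrite in_setI mem_chain_el2 // mem_chain_el0 //; apply/idP/idP; lia.
have a1M := block_end a_next.
have -> : (3 * a + 2).+1 %% (3 * k) = 3 * a.+1 by rewrite modn_small; lia.
apply: (@card_set2_nat _ (a * M + M) (a * M + M + 1)); try lia.
move=> z; have zkM := ltn_ord z.
by rewrite in_setI mem_chain_el2 // mem_chain_el0 // mulSn; apply/idP/idP; lia.
Qed.

Lemma chain_el_cover (z : 'I_(k * M)) : exists2 j, j < 3 * k & z \in chain_el j.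
Proof.
have [ak _] := chain_vertex_block z; set a := z %/ M in ak.
have [h4 hM] := half_bounds.
have zM : a * M <= z < a * M + M.
  have := divn_eq z M; have := ltn_pmod z (ltn_trans (isT : 0 < 7) M_ge8); rewrite -/a; lia.
case: (ltnP z (a * M + half + 1)) => zh.
  by exists (3 * a); [lia | rewrite mem_chain_el0 //; lia].
by exists (3 * a + 1); [lia | rewrite mem_chain_el1 //; lia].
Qed.

Lemma chain_vertex_link a (z : 'I_(k * M)) : a < k -> z \in chain_el (3 * a + 2) ->
  chain_vertex z \in [set x a; y a; u a; w a].
Proof.
move=> ak; rewrite mem_chain_el2 // => z_el; have zkM := ltn_ord z.
have aM := block_end ak; have [xE yE] := nth_block_seq_last ak.
have [zE|[zE|z_next]] : (z : nat) = a * M + (M - 2) \/ (z : nat) = a * M + (M - 1) \/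
    (z + k * M < a * M + M + 2 \/ a * M + M <= z) by lia.
- by rewrite (chain_vertexE ak _ zE) ?xE ?inE ?eqxx //; lia.
- by rewrite (chain_vertexE ak _ zE) ?yE ?inE ?eqxx ?orbT //; lia.
have [b [bk pred_b zE01]] : exists b, [/\ b < k, pred_mod k b = a &
    (z : nat) = b * M \/ (z : nat) = b * M + 1].
  have [a_last|a_next] : a.+1 = k \/ a.+1 < k by lia.
    have kM : k * M = a * M + M by rewrite -a_last mulSn addnC.
    by exists 0; rewrite pred_mod0 //; split; lia.
  have := block_end a_next; rewrite mulSn => a1M.
  by exists a.+1; rewrite pred_modS //; split=> //; rewrite mulSn; lia.
case: zE01 => zE.
- rewrite (chain_vertexE bk _ (etrans zE (esym (addn0 _)))); last lia.
  by rewrite /block_seq /= pred_b !inE eqxx !orbT.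
- rewrite (chain_vertexE bk _ zE); last lia.
  by rewrite /block_seq /= pred_b !inE eqxx !orbT.
Qed.

Lemma chain_el_red j : j < 3 * k -> forall a1 b1 c1 : 'I_(k * M),
  a1 \in chain_el j -> b1 \in chain_el j -> c1 \in chain_el j ->
  a1 != b1 -> a1 != c1 -> b1 != c1 ->
  col [set chain_vertex a1; chain_vertex b1; chain_vertex c1].
Proof.
move=> /div3_cases[a ak j_cases] a1 b1 c1 a1j b1j c1j ab ac bc.
have v_neq (z z' : 'I_(k * M)) : z != z' -> chain_vertex z != chain_vertex z'.
  by apply: contra => /eqP /chain_vertex_inj ->.
have in_block (z : 'I_(k * M)) : a * M <= z < a * M + M -> chain_vertex z \in B a.
  move=> zM; have [_] := chain_vertex_block z.
  suff -> : z %/ M = a by [].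
  by apply/eqP; rewrite eqn_leq -ltnS ltn_divLR ?leq_divRL; lia.
have [h4 hM] := half_bounds.
case: j_cases => jE; subst j.
- move: a1j b1j c1j; rewrite !mem_chain_el0 // => a1j b1j c1j.
  by apply: (B_red ak); rewrite ?v_neq //; apply: in_block; lia.
- move: a1j b1j c1j; rewrite !mem_chain_el1 // => a1j b1j c1j.
  by apply: (B_red ak); rewrite ?v_neq //; apply: in_block; lia.
- by apply: (link_red ak); rewrite ?v_neq // chain_vertex_link.
Qed.

Lemma card_spine_set : #|spine_set (3 * k) chain_el| <= 6 * k.
Proof.
have spine_sub : spine_set (3 * k) chain_el \subset
    \bigcup_(j : 'I_(3 * k)) (chain_el j :&: chain_el (j.+1 %% (3 * k))).
  by apply/subsetP => z; rewrite inE => /existsP[j zj]; apply/bigcupP; exists j.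
apply: leq_trans (subset_leq_card spine_sub) _.
apply: leq_trans (card_big_setU _ _ _) _.
rewrite (eq_bigr (fun _ => 2)) => [|j _]; last exact: chain_el_meet.
by rewrite sum_nat_const card_ord; lia.
Qed.

Lemma red_chain_of_links : exists (v : 'I_(k * M) -> 'I_n) (I : nat -> {set 'I_(k * M)}),
  [/\ red_closed_chain col v (3 * k) I,
      forall j, j < 3 * k -> flexible_elem v I j -> M <= 2 * #|chain_elem v I j| &
      #|spine_set (3 * k) I| <= 6 * k].
Proof.
have [h4 hM] := half_bounds.
exists chain_vertex, chain_el; split; last exact: card_spine_set.
  do !split.
  - exact: chain_vertex_inj.
  - lia.
  - exact: chain_el_cyc.
  - by move=> j /card_chain_el[[_ ->]|[_ ->]|->]; lia.
  - exact: chain_el_meet.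
  - by move=> z; have [j jk zj] := chain_el_cover z; exists j.
  - exact: chain_el_red.
move=> j /card_chain_el; rewrite /flexible_elem /chain_elem card_imset; last exact: chain_vertex_inj.
by case=> [[_ ->]|[_ ->]|->]; lia.
Qed.
End Chain.

Section Links.
Variables (n : nat) (col : colouring n).

(* Deleting up to two vertices per block lets consecutive links of the chain avoid each other. *)
Definition linked (A B : {set 'I_n}) := forall X Y : {set 'I_n}, X \subset A -> Y \subset B ->
  #|A| - 2 <= #|X| -> #|B| - 2 <= #|Y| -> ~ no_red22 col X Y.

Lemma linked_sym A B : linked A B -> linked B A.
Proof. by move=> AB X Y XB YA Xbig Ybig /no_red22C; apply: AB. Qed.

Definition unlinked (A B : {set 'I_n}) (XY : {set 'I_n} * {set 'I_n}) :=
  [/\ XY.1 \subset A, XY.2 \subset B, #|A| - 2 <= #|XY.1|, #|B| - 2 <= #|XY.2| &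
      no_red22 col XY.1 XY.2].

Lemma not_linked_witness A B : ~ linked A B -> exists XY, unlinked A B XY.
Proof.
by apply: contra_notP => no_XY X Y XA YB Xbig Ybig XY; apply: no_XY; exists (X, Y).
Qed.

Lemma linked_red22 A B (D E : {set 'I_n}) : linked A B -> #|D| <= 2 -> #|E| <= 2 ->
  exists x y u w, [/\ [/\ x \in A :\: D, y \in A :\: D, u \in B :\: E & w \in B :\: E],
                     x != y, u != w & red_set col [set x; y; u; w]].
Proof.
move=> AB D2 E2.
have card_setD (C F : {set 'I_n}) : #|F| <= 2 -> #|C| - 2 <= #|C :\: F|.
  by move=> F2; rewrite cardsD; have := subset_leq_card (subsetIr C F); lia.
have := AB _ _ (subsetDl A D) (subsetDl B E) (card_setD A D D2) (card_setD B E E2).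
apply: contra_notP => no_red22_AB x y u w Xx Xy Yu Yw xy uw red.
by apply: no_red22_AB; exists x, y, u, w.
Qed.

(* Links are chosen in the order 0, ..., k - 1, each avoiding the previous one in their common
   block; the last one must also avoid link 0. *)
Definition link_ok k (B : nat -> {set 'I_n}) (x y u w : nat -> 'I_n) a :=
  [/\ [/\ x a \in B a, y a \in B a, u a \in B (a.+1 %% k) & w a \in B (a.+1 %% k)],
      (x a != y a) && (u a != w a), red_set col [set x a; y a; u a; w a],
      0 < a -> (x a \notin [set u a.-1; w a.-1]) && (y a \notin [set u a.-1; w a.-1]) &
      a = k.-1 -> (u a \notin [set x 0; y 0]) && (w a \notin [set x 0; y 0])].

Lemma links_exist k (B : nat -> {set 'I_n}) (i0 : 'I_n) : 1 < k ->
  (forall a, a < k -> linked (B a) (B (a.+1 %% k))) ->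
  exists x y u w : nat -> 'I_n, forall a, a < k -> link_ok k B x y u w a.
Proof.
move=> k_gt1 B_linked.
suff /(_ k (leqnn k)) : forall j, j <= k ->
    exists x y u w : nat -> 'I_n, forall a, a < j -> link_ok k B x y u w a by [].
elim=> [|j IH] jk; first by exists (fun=> i0), (fun=> i0), (fun=> i0), (fun=> i0).
have [x [y [u [w ok]]]] := IH (ltnW jk).
have card_ite (b : bool) (c d : 'I_n) : #|if b then [set c; d] else set0| <= 2.
  by case: b; rewrite ?cards0 // cards2; case: (c != d).
have [x' [y' [u' [w' [[Xx Xy Yu Yw] xy uw red]]]]] :=
  linked_red22 (B_linked j jk) (card_ite (0 < j) (u j.-1) (w j.-1))
    (card_ite (j == k.-1) (x 0) (y 0)).
pose upd (f : nat -> 'I_n) v a := if a == j then v else f a.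
exists (upd x x'), (upd y y'), (upd u u'), (upd w w') => a aj; rewrite /link_ok /upd.
have [a_lt_j|a_gt_j|->] := ltngtP a j; last first.
- rewrite xy uw.
  move: Xx Xy Yu Yw; rewrite !inE => /andP[Dx Bx] /andP[Dy By] /andP[Eu Bu] /andP[Ew Bw].
  split=> // [j_gt0|j_last].
  + have -> : j.-1 == j = false by apply/negbTE; lia.
    by move: Dx Dy; rewrite j_gt0 !inE => -> ->.
  + have -> : 0 == j = false by apply/negbTE; lia.
    by move: Eu Ew; rewrite j_last eqxx !inE => -> ->.
- lia.
have [a1j j0] : a.-1 == j = false /\ 0 == j = false by split; apply/negbTE; lia.
by rewrite a1j j0; apply: ok.
Qed.

Lemma ports_of_links k (B : nat -> {set 'I_n}) x y u w : 1 < k ->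
  (forall a, a < k -> link_ok k B x y u w a) ->
  forall a, a < k -> [/\ uniq (ports k x y u w a), {subset ports k x y u w a <= B a} &
                        red_set col [set x a; y a; u a; w a]].
Proof.
move=> k_gt1 ok a ak; set p := pred_mod k a.
have k_gt0 : 0 < k by lia.
have pk : p < k by rewrite ltn_mod.
have [[Bx By _ _] /andP[xy _] red a_gt0 _] := ok a ak.
have [[_ _ Bu Bw] /andP[_ uw] _ _ p_last] := ok p pk.
rewrite pred_modK // in Bu Bw.
have cross : [&& x a != u p, x a != w p, y a != u p & y a != w p].
  have [a0|a_pos] := posnP a.
    have pE : p = k.-1 by rewrite /p a0 pred_mod0 //; lia.
    move: (p_last pE); rewrite a0 !inE !negb_or => /andP[/andP[ux uy] /andP[wx wy]].
    by rewrite ![x 0 == _]eq_sym ![y 0 == _]eq_sym ux uy wx wy.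
  have pE : p = a.-1 by rewrite /p -(prednK a_pos) pred_modS ?prednK.
  by move: (a_gt0 a_pos); rewrite pE !inE !negb_or -!andbA.
split=> //; last by move=> z; rewrite !inE => /or4P[]/eqP->.
rewrite /ports -/p /= !inE !negb_or uw xy ![u p == _]eq_sym ![w p == _]eq_sym.
by case/and4P: cross => -> -> -> ->.
Qed.


Lemma ports_exist k (B : nat -> {set 'I_n}) (i0 : 'I_n) : 0 < k ->
  (forall a, a < k -> 4 <= #|B a| /\ red_set col (B a)) ->
  (1 < k -> forall a, a < k -> linked (B a) (B (a.+1 %% k))) ->
  exists x y u w : nat -> 'I_n, forall a, a < k ->
    [/\ uniq (ports k x y u w a), {subset ports k x y u w a <= B a} &
        red_set col [set x a; y a; u a; w a]].
Proof.
move=> k_gt0 B_red B_linked.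
have [k1|k_gt1] : k = 1 \/ 1 < k by lia.
  subst k; have [B4 redB] := B_red 0 isT.
  have /card_geqP[s [+ + sB]] := B4.
  case: s sB => [|a [|b [|c [|d []]]]] //= abcdB abcd_uniq _.
  exists (fun=> c), (fun=> d), (fun=> a), (fun=> b) => e; rewrite ltnS leqn0 => /eqP->.
  split=> //.
  apply: red_setS redB; apply/subsetP => z /set4P[]-> {z};
    by apply: abcdB; rewrite !inE eqxx ?orbT.
have [x [y [u [w ok]]]] := links_exist i0 k_gt1 (B_linked k_gt1).
by exists x, y, u, w; apply: ports_of_links.
Qed.

End Links.

Lemma card_bigcap_ge (T I : finType) (P : pred I) (A : {set T}) (F : I -> {set T}) :
  #|A| <= #|A :&: \bigcap_(i | P i) F i| + \sum_(i | P i) #|A :\: F i|.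
Proof.
rewrite -(cardsID (\bigcap_(i | P i) F i) A) leq_add2l.
apply: leq_trans (subset_leq_card _) (card_big_setU _ P (fun i => A :\: F i)).
apply/subsetP => z; rewrite setDE setC_bigcap inE => /andP[Az /bigcupP[i Pi]].
by rewrite inE => Fz; apply/bigcupP; exists i => //; rewrite inE Fz Az.
Qed.

Lemma card_setD_setI (T : finType) (A X Y : {set T}) :
  X \subset A -> Y \subset A -> #|A| - 2 <= #|X| -> #|A| - 2 <= #|Y| -> #|A :\: (X :&: Y)| <= 4.
Proof.
move=> XA YA Xbig Ybig; rewrite setDIr; apply: leq_trans (leq_card_setU _ _) _.
by rewrite !cardsD (setIidPr XA) (setIidPr YA); lia.
Qed.

Section Independence.
Variables (chi m Rv n t M : nat) (col : colouring n) (P : 'I_t -> {set 'I_n}).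
Hypotheses (TT : TT_forced chi Rv) (no_blue_H : ~ blue_H chi m col).
Hypotheses (P_disj : forall i j, i != j -> [disjoint P i & P j]) (P_card : forall i, #|P i| = M).
Hypothesis M_big : iter (Rv * Rv) pair_bound m + 4 * Rv <= M.

Lemma linked_pair (S : {set 'I_t}) : Rv <= #|S| ->
  exists i j, [/\ i \in S, j \in S, i != j & linked col (P i) (P j)].
Proof.
move=> S_big; apply: contrapT => no_pair; apply: no_blue_H.
pose h (a : 'I_Rv) := enum_val (widen_ord S_big a).
have h_inj : injective h by move=> a b /enum_val_inj /(congr1 val) /= /val_inj.
have wit_ex (ab : 'I_Rv * 'I_Rv) :
    exists XY, ab.1 != ab.2 -> unlinked col (P (h ab.1)) (P (h ab.2)) XY.
  have [_|ab_ne] := eqVneq ab.1 ab.2; first by exists (set0, set0).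
  have [XY XY_ok] : exists XY, unlinked col (P (h ab.1)) (P (h ab.2)) XY.
    apply: not_linked_witness => linked_ab; apply: no_pair.
    by exists (h ab.1), (h ab.2); rewrite !enum_valP (inj_eq h_inj).
  by exists XY.
have [wit wit_ok] := choice wit_ex.
pose W a := P (h a) :&: \bigcap_(b | b != a) ((wit (a, b)).1 :&: (wit (b, a)).2).
have W_wit a b z : b != a -> z \in W a -> z \in (wit (a, b)).1 /\ z \in (wit (b, a)).2.
  by move=> ba; rewrite inE => /andP[_ /bigcapP/(_ b ba)]; rewrite inE => /andP.
apply: (@blue_H_of_no_red22 _ _ _ _ Rv W TT).
- move=> a b ab; have PP : [disjoint P (h a) & P (h b)] by apply: P_disj; rewrite (inj_eq h_inj).
  exact: disjointWl (subsetIl _ _) (disjointWr (subsetIl _ _) PP).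
- move=> a b ab; have [_ _ _ _ XY] := wit_ok (a, b) ab.
  have ba : b != a by rewrite eq_sym.
  apply: no_red22S XY; apply/subsetP => z Wz.
  - by case: (W_wit a b z ba Wz).
  - by case: (W_wit b a z ab Wz).
move=> a.
have sum4 : \sum_(b | b != a) #|P (h a) :\: ((wit (a, b)).1 :&: (wit (b, a)).2)| <= 4 * Rv.
  apply: leq_trans (_ : \sum_(b | b != a) 4 <= _).
    apply: leq_sum => b ba; have ab : a != b by rewrite eq_sym.
    have [Xa _ Xa_big _ _] := wit_ok (a, b) ab.
    have [_ Ya _ Ya_big _] := wit_ok (b, a) ba.
    exact: card_setD_setI.
  by rewrite sum_nat_const mulnC leq_mul2l (leq_trans (max_card _)) ?card_ord ?orbT.
have := card_bigcap_ge (fun b => b != a) (P (h a)) (fun b => (wit (a, b)).1 :&: (wit (b, a)).2).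
rewrite P_card -/(W a) => W_card; lia.
Qed.

End Independence.

Lemma cycle_nth (T : eqType) (e : rel T) (x0 : T) (c : seq T) i :
  cycle e c -> i < size c -> e (nth x0 c i) (nth x0 c (i.+1 %% size c)).
Proof.
case: c => [|x p] //= /(pathP x0) c_path ip.
have := c_path i; rewrite size_rcons => /(_ ip).
rewrite -rcons_cons nth_rcons /= ip.
case: (ltngtP i.+1 (size p).+1) => [i_lt|i_gt|i_last].
- by rewrite modn_small // nth_rcons (_ : i < size p) //; lia.
- lia.
have i_p : i = size p by lia.
rewrite i_last modnn /= nth_rcons i_p ltnn eqxx.
by case: (size p) => [|j] //=; rewrite ltnn.
Qed.

Definition linked_graph n (col : colouring n) t (P : 'I_t -> {set 'I_n}) : rel 'I_t :=
  fun i j => (i != j) && `[< linked col (P i) (P j) >].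

Lemma long_linked_cycle chi m Rv n t M (col : colouring n) (P : 'I_t -> {set 'I_n}) :
  TT_forced chi Rv -> ~ blue_H chi m col ->
  (forall i j, i != j -> [disjoint P i & P j]) -> (forall i, #|P i| = M) ->
  iter (Rv * Rv) pair_bound m + 4 * Rv <= M -> 2 <= Rv -> 0 < t ->
  exists c : seq 'I_t,
    [/\ uniq c, c != [::], graph_cycle (linked_graph col P) c & t <= size c * Rv.-1].
Proof.
move=> TT no_blue_H P_disj P_card M_big Rv_ge2 t_gt0.
have G_sym : symmetric (linked_graph col P).
  by move=> i j; rewrite /linked_graph eq_sym; congr andb; apply/asboolP/asboolP; apply: linked_sym.
have G_irr : irreflexive (linked_graph col P) by move=> i; rewrite /linked_graph eqxx.
have [||c [c_uniq _ c_ne c_cycle]] := @long_cycle _ _ G_sym G_irr Rv.-1 setT.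
- move=> S _; rewrite -ltnS (ltn_predK Rv_ge2) => S_big.
  have [i [j [Si Sj ij ij_linked]]] := linked_pair TT no_blue_H P_disj P_card M_big S_big.
  by exists i, j; split=> //; rewrite /linked_graph ij; apply/asboolP.
- by apply/set0Pn; exists (Ordinal t_gt0).
by rewrite cardsT card_ord; exists c.
Qed.

Lemma red_chain_of_linked_cycle n (col : colouring n) t M (P : 'I_t -> {set 'I_n}) (c : seq 'I_t) :
  8 <= M -> (forall i j, i != j -> [disjoint P i & P j]) -> (forall i, #|P i| = M) ->
  (forall i, red_set col (P i)) -> uniq c -> c != [::] -> graph_cycle (linked_graph col P) c ->
  exists (v : 'I_(size c * M) -> 'I_n) (I : nat -> {set 'I_(size c * M)}),
    [/\ red_closed_chain col v (3 * size c) I,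
        forall j, j < 3 * size c -> flexible_elem v I j -> M <= 2 * #|chain_elem v I j| &
        #|spine_set (3 * size c) I| <= 6 * size c].
Proof.
move=> M_ge8 P_disj P_card P_red c_uniq c_ne c_cycle.
have [i0 k_gt0] : exists i0 : 'I_t, 0 < size c by move: c_ne; case: (c) => // i0 _ _; exists i0.
have [x0 _] : exists x0 : 'I_n, x0 \in P i0 by apply/set0Pn; rewrite -card_gt0 P_card; lia.
pose B a := P (nth i0 c a).
have [||x [y [u [w ports_ok]]]] := @ports_exist n col (size c) B x0 k_gt0.
- by move=> a _; rewrite /B P_card; split; [lia | apply: P_red].
- move=> k_gt1 a ak; move: c_cycle; rewrite /graph_cycle gtn_eqF //= => c_cycle.
  by have /andP[_ /asboolP] := cycle_nth i0 c_cycle ak.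
apply: (red_chain_of_links x0 M_ge8 k_gt0 (B := B) (x := x) (y := y) (u := u) (w := w)).
- by move=> a _; apply: P_card.
- by move=> a b ak bk ab; apply: P_disj; rewrite nth_uniq.
- by move=> a _; apply: P_red.
- by move=> a ak; case: (ports_ok a ak).
- by move=> a ak; case: (ports_ok a ak).
- by move=> a ak; case: (ports_ok a ak).
Qed.

Lemma tourn_ramsey_ge2 chi Rv : 2 <= chi -> TT_forced chi Rv -> 2 <= Rv.
Proof.
move=> chi_ge2 TT; rewrite leqNgt; apply/negP => Rv_small.
have T1 : tournament (fun _ _ : 'I_1 => false) by split=> // x y; rewrite (ord1 x) (ord1 y) eqxx.
have [g [g_inj _]] := TT 1 (ltnSE Rv_small) _ T1.
have /g_inj /(congr1 val) // : g (Ordinal (ltnW chi_ge2)) = g (Ordinal chi_ge2).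
by rewrite (ord1 (g _)) (ord1 (g (Ordinal chi_ge2))).
Qed.

Section RealBounds.
Local Open Scope ring_scope.
Variable RR : realType.

Lemma chain_size_bound (t M k Rv : nat) : (2 <= Rv)%N -> (30 <= M)%N -> (t <= k * Rv.-1)%N ->
  (t%:R * (M%:R - 30)) / (Rv%:R - 1) <= ((k * M)%:R : RR).
Proof.
move=> Rv_ge2 M_ge30 t_le.
have -> : (M%:R - 30 : RR) = (M - 30)%:R by rewrite natrB.
have -> : (Rv%:R - 1 : RR) = (Rv.-1)%:R by rewrite -{1}(prednK (ltnW Rv_ge2)) -natr1 addrK.
rewrite -natrM ler_pdivrMr ?ltr0n; last lia.
rewrite -natrM ler_nat.
have : (t * (M - 30) <= t * M)%N by apply: leq_mul => //; exact: leq_subr.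
by have := leq_mul t_le (leqnn M); nia.
Qed.

Lemma spine_bound (eps : RR) (N M k s : nat) : 0 < eps -> 6 / eps < N%:R ->
  (N <= M)%N -> (s <= 6 * k)%N -> (s%:R : RR) <= eps * (k * M)%:R.
Proof.
move=> eps_gt0 N_big NM s_le.
have eps_M : 6 <= eps * M%:R.
  have : 6 / eps < M%:R by apply: lt_le_trans N_big _; rewrite ler_nat.
  by rewrite ltr_pdivrMr // mulrC => /ltW.
apply: le_trans (_ : ((6 * k)%:R : RR) <= _); first by rewrite ler_nat.
rewrite !natrM mulrCA [k%:R * _]mulrC.
by apply: ler_wpM2r; rewrite ?ler0n.
Qed.

End RealBounds.

Theorem corollary5p2 (chi m Rv : nat) (RR : realType) (eps : RR) :
  2 <= chi -> 2 <= m -> (0 < eps)%R -> is_tourn_ramsey chi Rv ->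
  exists M0 : nat, forall M : nat, M0 <= M ->
  forall t : nat, 1 <= t ->
  forall col : colouring (t * M), ~ blue_H chi m col ->
  forall P : 'I_t -> {set 'I_(t * M)},
    (forall i j, i != j -> [disjoint P i & P j]) ->
    (forall x, exists i, x \in P i) ->
    (forall i, #|P i| = M) ->
    (forall i a b c, a \in P i -> b \in P i -> c \in P i ->
       a != b -> a != c -> b != c -> col [set a; b; c]) ->
  exists (p : nat) (v : 'I_p -> 'I_(t * M)) (d : nat) (I : nat -> {set 'I_p}),
    [/\ red_closed_chain col v d I,
        ((t%:R * (M%:R - 30)) / (Rv%:R - 1) <= (p%:R : RR))%R,
        (forall j, j < d -> flexible_elem v I j -> M <= 2 * #|chain_elem v I j|) &
        ((#|spine_set d I|%:R : RR) <= eps * p%:R)%R].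
Proof.
move=> chi_ge2 _ eps_gt0 [TT _].
have Rv_ge2 := tourn_ramsey_ge2 chi_ge2 TT.
pose N := Num.Def.archi_bound (6 / eps)%R.
have N_big : (6 / eps < N%:R)%R by apply: archi_boundP; rewrite divr_ge0 // ltW.
exists (iter (Rv * Rv) pair_bound m + 4 * Rv + 30 + N).
move=> M M_big t t_ge1 col no_blue_H P P_disj _ P_card P_red.
have [c [c_uniq c_ne c_cycle t_le]] :=
  long_linked_cycle TT no_blue_H P_disj P_card ltac:(lia) Rv_ge2 t_ge1.
have M_ge8 : 8 <= M by lia.
have [v [I [chain flex spine]]] :=
  red_chain_of_linked_cycle M_ge8 P_disj P_card P_red c_uniq c_ne c_cycle.
exists (size c * M), v, (3 * size c), I; split => //.
- by apply: chain_size_bound t_le; lia.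
- by apply: spine_bound eps_gt0 N_big _ spine; lia.
Qed.
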